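(* Let $k\geq 4$ and let $G$ be a diregular $(2,k,+3)$-digraph. Let $u,v$ be distinct vertices with exactly one common out-neighbour $u_2$, and write $N^+(u)=\{u_1,u_2\}$, $N^+(v)=\{v_1,u_2\}$. Then $N^+(u_1)\cap N^+(v_1)\neq\varnothing$.
   Context: A digraph is $k$-geodetic if for every ordered pair of vertices $x,y$ there is at most one directed path from $x$ to $y$ of length at most $k$ (the trivial path counts). A diregular $(2,k,+3)$-digraph is a $k$-geodetic digraph of order $1+2+\dots+2^k+3$ in which every vertex has in- and out-degree $2$. $N^+(x)$ is the set of out-neighbours of $x$. *)

From mathcomp Require Import all_boot.
Set Implicit Arguments. Unset Strict Implicit. Unset Printing Implicit Defensive.

Definition outN (V : finType) (e : rel V) (x : V) : {set V} := [set y | e x y].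
Definition inN (V : finType) (e : rel V) (x : V) : {set V} := [set y | e y x].

(* A directed path (walk) from x to y of length size p is a sequence p of
   vertices following x, with consecutive arcs, ending at y.  The trivial
   path is p = [::] (when x = y). *)
Definition dpath (V : finType) (e : rel V) (x y : V) (p : seq V) : bool :=
  path e x p && (last x p == y).

Definition k_geodetic (V : finType) (e : rel V) (k : nat) : Prop :=
  forall (x y : V) (p q : seq V),
    size p <= k -> size q <= k -> dpath e x y p -> dpath e x y q -> p = q.

Definition diregular (V : finType) (e : rel V) (d : nat) : Prop :=
  forall x : V, #|outN e x| = d /\ #|inN e x| = d.

Definition two_k_plus3_digraph (V : finType) (e : rel V) (k : nat) : Prop :=
  [/\ k_geodetic e k, diregular e 2 & #|V| = \sum_(0 <= i < k.+1) 2 ^ i + 3].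

From mathcomp Require Import all_boot zify.
Set Implicit Arguments. Unset Strict Implicit. Unset Printing Implicit Defensive.

(* Let Q be the set of vertices that v does not reach by a walk of length
   1..k.  By k-geodecity and the order of G, |Q| = 4: Q consists of v and its
   out-excess set.  Assume N+(u1) and N+(v1) are disjoint.  If a vertex x is
   reached from u1 in i steps and from v1 in j steps, with i < j < k, then the
   whole layer at distance k - j from x lies in Q, which forces k - j = 1; from
   this, both out-neighbours of u1 lie in Q.  Hence at most one vertex at
   distance 2 from u1 lies in Q, and each of the others lies in the out-excess
   set of u2, since otherwise it would have three in-neighbours.  That set has
   only three elements, so exactly one vertex z0 at distance 2 from u1 lies in
   Q, and chasing its out-neighbours forces N+(z0) = {v, v1}: then z0 reaches
   v1 by walks of lengths 1 and 2, contradicting k-geodecity. *)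

Lemma sum_pow2 n : \sum_(0 <= i < n) 2 ^ i = (2 ^ n).-1.
Proof.
elim: n => [|n IH]; first by rewrite big_nil.
have : 0 < 2 ^ n by rewrite expn_gt0.
by rewrite big_nat_recr //= IH expnS; lia.
Qed.

Section Digraph.
Variables (V : finType) (e : rel V).

Fixpoint reach (j : nat) (x : V) : {set V} :=
  if j is j'.+1 then \bigcup_(z in outN e x) reach j' z else [set x].

Definition ball (j : nat) (x : V) : {set V} := \bigcup_(i < j) reach i x.

Lemma in_outN x y : (y \in outN e x) = e x y.
Proof. by rewrite inE. Qed.

Lemma outN2_arcl x a b : outN e x = [set a; b] -> e x a.
Proof. by move=> Hx; rewrite -in_outN Hx set21. Qed.

Lemma outN2_arcr x a b : outN e x = [set a; b] -> e x b.
Proof. by move=> Hx; rewrite -in_outN Hx set22. Qed.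

Lemma reach0 x y : (y \in reach 0 x) = (y == x).
Proof. exact: in_set1. Qed.

Lemma reachS j x y :
  reflect (exists2 z, e x z & y \in reach j z) (y \in reach j.+1 x).
Proof. by apply: (iffP bigcupP) => -[z xz yz]; exists z; rewrite ?inE in xz *. Qed.

Lemma reach1 x y : (y \in reach 1 x) = e x y.
Proof.
apply/reachS/idP => [[z xz]|xy]; last by exists y; rewrite ?reach0.
by rewrite reach0 => /eqP->.
Qed.

Lemma reachD i j x y :
  reflect (exists2 z, z \in reach i x & y \in reach j z) (y \in reach (i + j) x).
Proof.
elim: i x => [|i IH] x.
  apply: (iffP idP) => [yx|[z]]; first by exists x; rewrite ?reach0.
  by rewrite reach0 => /eqP->.
apply: (iffP (reachS _ _ _)) => [[z xz /IH[w zw yw]]|[w /reachS[z xz zw] yw]].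
  by exists w => //; apply/reachS; exists z.
by exists z => //; apply/IH; exists w.
Qed.

Lemma reachSr j x y :
  reflect (exists2 z, z \in reach j x & e z y) (y \in reach j.+1 x).
Proof.
rewrite -addn1; apply: (iffP (reachD _ _ _ _)) => -[z xz zy].
  by exists z; rewrite // -reach1.
by exists z; rewrite // reach1.
Qed.

Lemma reach_dpath j x y :
  reflect (exists2 p, size p = j & dpath e x y p) (y \in reach j x).
Proof.
elim: j x => [|j IH] x.
  rewrite reach0; apply: (iffP eqP) => [->|[[|z p] //= _ /andP[_ /eqP //]]].
  by exists [::]; rewrite /dpath /=.
apply: (iffP (reachS _ _ _)) => [[z xz]|[[|z p] //= [sp] /andP[/andP[xz zp] yp]]].
  by case/IH=> p <- /andP[zp yp]; exists (z :: p); rewrite /dpath /= ?xz ?zp.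
by exists z => //; apply/IH; exists p => //; apply/andP.
Qed.

Lemma ballP j x y : reflect (exists2 i, i < j & y \in reach i x) (y \in ball j x).
Proof.
apply: (iffP bigcupP) => [[i _ yi]|[i ij yi]]; first by exists i.
by exists (Ordinal ij).
Qed.

Lemma ball_reach i j x y : i < j -> y \in reach i x -> y \in ball j x.
Proof. by move=> ij yi; apply/ballP; exists i. Qed.

Variable k : nat.
Hypothesis geo : k_geodetic e k.

Lemma reach_inj i j x y :
  i <= k -> j <= k -> y \in reach i x -> y \in reach j x -> i = j.
Proof.
move=> ik jk /reach_dpath[p pi xp] /reach_dpath[q qj xq]; subst i j.
by rewrite (geo ik jk xp xq).
Qed.

Lemma reach_first_arc_inj x z z' i j y : i < k -> j < k ->
  e x z -> e x z' -> y \in reach i z -> y \in reach j z' -> z = z'.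
Proof.
move=> ik jk xz xz' /reach_dpath[p pi zp] /reach_dpath[q qj zq]; subst i j.
have dp w r : e x w -> dpath e w y r -> dpath e x y (w :: r).
  by move=> xw /andP[wr wy]; rewrite /dpath /= xw wr.
by case: (@geo x y (z :: p) (z' :: q) ik jk (dp _ _ xz zp) (dp _ _ xz' zq)).
Qed.

Lemma reach_neq i j x y z : i <= k -> j <= k -> i != j ->
  y \in reach i x -> z \in reach j x -> y != z.
Proof.
move=> ik jk ij yi zj; apply: contraNneq ij => yz.
by rewrite yz in yi; rewrite (reach_inj ik jk yi zj).
Qed.

Lemma parent_notin_ball w c : e w c -> w \notin ball k c.
Proof.
move=> wc; apply/ballP => -[i ik ci].
have wi : w \in reach i.+1 w by apply/reachS; exists c.
by have := reach_inj (leq0n k) ik (set11 w) wi.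
Qed.

Lemma ball_children_disjoint w c c' y :
  e w c -> e w c' -> c != c' -> y \in ball k c -> y \notin ball k c'.
Proof.
move=> wc wc' cc' /ballP[i ik yi]; apply/ballP => -[j jk yj].
by rewrite (reach_first_arc_inj ik jk wc wc' yi yj) eqxx in cc'.
Qed.

Lemma ball_reach_disjoint j x : j <= k -> [disjoint ball j x & reach j x].
Proof.
move=> jk; rewrite disjoints_subset; apply/subsetP => y /ballP[i ij yi].
rewrite inE; apply/negP => yj.
have eij := reach_inj (ltnW (leq_trans ij jk)) jk yi yj.
by rewrite eij ltnn in ij.
Qed.

Hypothesis reg : diregular e 2.

Lemma outN2_neq x a b : outN e x = [set a; b] -> a != b.
Proof. by move=> Hx; have := (reg x).1; rewrite Hx cards2; case: (a != b). Qed.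

Lemma other_out_arc x y : exists2 z, e x z & z != y.
Proof.
have : 0 < #|outN e x :\ y|.
  by have := cardsD1 y (outN e x); rewrite (reg x).1; case: (y \in _) => /=; lia.
by case/card_gt0P => z; rewrite !inE => /andP[zy xz]; exists z.
Qed.

Lemma card_reach j x : j <= k -> #|reach j x| = 2 ^ j.
Proof.
elim: j x => [|j IH] x jk; first exact: cards1.
have /cards2P[a [b [ab Hx]]] : #|outN e x| == 2 by rewrite (reg x).1.
have dis : [disjoint reach j a & reach j b].
  rewrite disjoints_subset; apply/subsetP => y ya; rewrite inE; apply/negP => yb.
  by rewrite (reach_first_arc_inj jk jk (outN2_arcl Hx) (outN2_arcr Hx) ya yb) eqxx in ab.
rewrite /= Hx bigcup_setU !big_set1 cardsU (disjoint_setI0 dis) cards0 subn0.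
by rewrite !IH ?(ltnW jk) // expnS mul2n addnn.
Qed.

Lemma card_ball j x : j <= k.+1 -> #|ball j x| = (2 ^ j).-1.
Proof.
elim: j => [|j IH] jk; first by rewrite /ball big_ord0 cards0.
rewrite /ball big_ord_recr /= -/(ball j x) cardsU.
rewrite (disjoint_setI0 (ball_reach_disjoint _ _)) // cards0 subn0.
rewrite IH ?card_reach ?(ltnW jk) //.
have : 0 < 2 ^ j by rewrite expn_gt0.
by rewrite expnS; lia.
Qed.

Lemma in_arc_cases p q y z : e p z -> e q z -> e y z -> p != q -> (y == p) || (y == q).
Proof.
move=> pz qz yz pq; rewrite -in_set2; apply: contraT => yNpq.
have : y |: [set p; q] \subset inN e z.
  by apply/subsetP => w; rewrite !inE => /or3P[]/eqP->.
by move/subset_leq_card; rewrite cardsU1 yNpq cards2 pq (reg z).2.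
Qed.

Hypothesis order : #|V| = \sum_(0 <= i < k.+1) 2 ^ i + 3.

Definition excess (x : V) : {set V} := ~: ball k.+1 x.

Lemma card_excess x : #|excess x| = 3.
Proof.
by have := cardsC (ball k.+1 x); rewrite /excess card_ball // order sum_pow2; lia.
Qed.

(* In a k-geodetic digraph, [unreached w] is [w |: excess w]. *)
Definition unreached (w : V) : {set V} := ~: \bigcup_(c in outN e w) ball k c.

Lemma unreachedP w y :
  reflect (forall c, e w c -> y \notin ball k c) (y \in unreached w).
Proof.
rewrite inE; apply: (iffP negP) => [yN c wc|yN /bigcupP[c]]; last first.
  by rewrite in_outN => /yN/negP.
by apply/negP => yc; apply: yN; apply/bigcupP; exists c; rewrite ?in_outN.
Qed.

Lemma unreachedPn w y :
  reflect (exists2 c, e w c & y \in ball k c) (y \notin unreached w).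
Proof.
rewrite inE negbK; apply: (iffP bigcupP) => -[c wc yc]; exists c => //.
  by rewrite -in_outN.
by rewrite in_outN.
Qed.

Lemma self_unreached w : w \in unreached w.
Proof. by apply/unreachedP => c; apply: parent_notin_ball. Qed.

Lemma card_unreached w : #|unreached w| = 4.
Proof.
have /cards2P[a [b [ab Hw]]] : #|outN e w| == 2 by rewrite (reg w).1.
have dis : [disjoint ball k a & ball k b].
  rewrite disjoints_subset; apply/subsetP => y ya; rewrite inE.
  exact: ball_children_disjoint (outN2_arcl Hw) (outN2_arcr Hw) ab ya.
have := cardsC (ball k a :|: ball k b).
rewrite cardsU (disjoint_setI0 dis) cards0 subn0 !card_ball // order sum_pow2.
rewrite /unreached Hw bigcup_setU !big_set1 expnS.
have : 0 < 2 ^ k by rewrite expn_gt0.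
lia.
Qed.

Lemma reach_sub_unreached m x w : m <= k -> reach m x \subset unreached w -> m <= 2.
Proof.
move=> mk /subset_leq_card; rewrite card_reach // card_unreached.
by rewrite -[4]/(2 ^ 2) leq_exp2l.
Qed.

Lemma reach_sub_unreachedD1 m x w y : m <= k -> reach m x \subset unreached w ->
  y \in unreached w -> y \notin reach m x -> m <= 1.
Proof.
move=> mk sub yw yx; have : reach m x \subset unreached w :\ y by rewrite subsetD1 sub.
have card3 : #|unreached w :\ y| = 3.
  by have := cardsD1 y (unreached w); rewrite yw card_unreached; lia.
by move/subset_leq_card; rewrite card_reach // card3 -ltnS -[4]/(2 ^ 2) ltn_exp2l.
Qed.

Hypothesis k_ge4 : 4 <= k.

Let k_gt2 : 2 < k := ltnW k_ge4.
Let k_gt1 : 1 < k := ltnW k_gt2.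
Let k_gt0 : 0 < k := ltnW k_gt1.

Section Configuration.
Variables u v u1 u2 v1 : V.
Hypotheses (Hu : outN e u = [set u1; u2]) (Hv : outN e v = [set v1; u2]).

Let u_u1 := outN2_arcl Hu.
Let u_u2 := outN2_arcr Hu.
Let v_v1 := outN2_arcl Hv.
Let v_u2 := outN2_arcr Hv.
Let u1_neq_u2 := outN2_neq Hu.
Let v1_neq_u2 := outN2_neq Hv.

Lemma ball_u1_reached_by_v1 y :
  y \in ball k u1 -> y \notin unreached v -> y \in ball k v1.
Proof.
move=> yu1 /unreachedPn[c]; rewrite -in_outN Hv => /set2P[]-> // yu2.
by rewrite (negPf (ball_children_disjoint u_u1 u_u2 u1_neq_u2 yu1)) in yu2.
Qed.

Lemma v_notin_reach_u1 i : i.+2 <= k -> v \notin reach i u1.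
Proof.
move=> ik; apply/negP => vi.
have u2i : u2 \in reach i.+2 u by apply/reachS; exists u1 => //; apply/reachSr; exists v.
have u21 : u2 \in reach 1 u by rewrite reach1.
by have := reach_inj ik k_gt0 u2i u21.
Qed.

Lemma reach2_u1_fresh z :
  z \in reach 2 u1 -> [/\ z != u1, z != v & z \notin reach 1 u1].
Proof.
move=> z2; split.
- exact: reach_neq k_gt1 (leq0n k) isT z2 (set11 u1).
- by apply: contraNneq (v_notin_reach_u1 (i:=2) k_ge4) => <-.
- by apply/negP => z1; have := reach_inj k_gt1 k_gt0 z2 z1.
Qed.

Lemma reach_tail_unreached x i j : i < j < k ->
  x \in reach i u1 -> x \in reach j v1 -> reach (k - j) x \subset unreached v.
Proof.
move=> /andP[ij jk] xi xj; have jkk : j + (k - j) = k := subnKC (ltnW jk).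
apply/subsetP => y yx; apply/unreachedP => c.
rewrite -in_outN Hv => /set2P[]->; apply/ballP => -[l lk yl].
  have yk : y \in reach (j + (k - j)) v1 by apply/reachD; exists x.
  rewrite jkk in yk; have kl := reach_inj (leqnn k) (ltnW lk) yk yl.
  by rewrite kl ltnn in lk.
have yu1 : y \in reach (i + (k - j)) u1 by apply/reachD; exists x.
have ik : i + (k - j) < k by rewrite -{2}jkk ltn_add2r.
by move: u1_neq_u2; rewrite (reach_first_arc_inj ik lk u_u1 u_u2 yu1 yl) eqxx.
Qed.

Lemma reach_v1_u1 j : 0 < j < k -> u1 \in reach j v1 -> j = k.-1.
Proof.
move=> jk u1j; have sub := reach_tail_unreached (i:=0) jk (set11 u1) u1j.
case/andP: jk => _ jk.
have kj2 : k - j <= 2 by apply: reach_sub_unreached sub; apply: leq_subr.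
have vNk : v \notin reach (k - j) u1.
  exact: v_notin_reach_u1 (@leq_trans 4 (k - j).+2 k kj2 k_ge4).
have kj1 : k - j = 1.
  apply/eqP; rewrite eqn_leq subn_gt0 jk andbT.
  exact: reach_sub_unreachedD1 (leq_subr _ _) sub (self_unreached v) vNk.
by rewrite -(subKn (ltnW jk)) kj1 subn1.
Qed.

(* Otherwise z has three in-neighbours: p, one on a walk from v1 and one on a
   walk from u2. *)
Lemma excess_u2_arc p z : p \in unreached v -> p \in ball k u1 -> e p z ->
  z \in ball k u1 -> z \notin unreached v -> z != v1 -> z \in excess u2.
Proof.
move=> pQ pu1 pz zu1 zQ zv1.
have /ballP[[|j] jk] := ball_u1_reached_by_v1 zu1 zQ; first by rewrite reach0 (negPf zv1).
case/reachSr=> q qj qz.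
have qv1 : q \in ball k v1 := ball_reach (ltnW jk) qj.
have qQ : q \notin unreached v by apply/unreachedPn; exists v1.
have pq : p != q by apply: contraTneq pQ => ->.
have zu2 : z \notin ball k u2 := ball_children_disjoint u_u1 u_u2 u1_neq_u2 zu1.
rewrite inE; apply/ballP => -[l]; rewrite ltnS leq_eqVlt.
case/orP=> [/eqP->|lk zl]; last by rewrite (ball_reach lk zl) in zu2.
rewrite -(prednK k_gt0) => /reachSr[y yk yz].
have yu2 : y \in ball k u2 by apply: ball_reach yk; rewrite ltn_predL.
case/orP: (in_arc_cases pz qz yz pq) => /eqP yE; rewrite yE in yu2.
  by rewrite (negPf (ball_children_disjoint u_u1 u_u2 u1_neq_u2 pu1)) in yu2.
by rewrite (negPf (ball_children_disjoint v_v1 v_u2 v1_neq_u2 qv1)) in yu2.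
Qed.

End Configuration.

Section DisjointOutNeighbourhoods.
Variables u v u1 u2 v1 : V.
Hypotheses (Hu : outN e u = [set u1; u2]) (Hv : outN e v = [set v1; u2]).
Hypothesis u1_v1_disjoint : outN e u1 :&: outN e v1 = set0.

Local Notation Q := (unreached v).

Let no_common_arc y : e u1 y -> e v1 y -> False.
Proof. by move=> u1y v1y; have := in_set0 y; rewrite -u1_v1_disjoint !inE u1y v1y. Qed.

Lemma u1_neq_v1 : u1 != v1.
Proof.
apply/eqP => u1v1; have := (reg u1).1.
by move: u1_v1_disjoint; rewrite -u1v1 setIid => ->; rewrite cards0.
Qed.

Lemma v1_notin_reach_u1 i : 0 < i <= 2 -> v1 \notin reach i u1.
Proof.
case/andP=> i0 i2; have ik : 0 < i < k by rewrite i0 (leq_ltn_trans i2 k_gt2).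
by apply/negP => /(reach_v1_u1 Hv Hu ik); lia.
Qed.

Lemma unreached_v_grandchildren x :
  u1 \in Q -> e u1 x -> x \notin Q -> reach 1 x \subset Q.
Proof.
move=> u1Q u1x xQ; have xu1 : x \in reach 1 u1 by rewrite reach1.
have /ballP[[|[|j]] jk xj] := ball_u1_reached_by_v1 Hu Hv (ball_reach k_gt1 xu1) xQ.
- by move: xj (v1_notin_reach_u1 (i:=1) isT); rewrite reach0 => /eqP <-; rewrite xu1.
- by rewrite reach1 in xj; case: (no_common_arc u1x xj).
have sub := reach_tail_unreached Hu Hv (i:=1) (j:=j.+2) jk xu1 xj.
have u1_notin : u1 \notin reach (k - j.+2) x.
  apply/negP => u1x'.
  have u1k : u1 \in reach (k - j.+2).+1 u1 by apply/reachS; exists x.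
  have kj : (k - j.+2).+1 <= k by rewrite ltn_subrL k_gt0.
  by have := reach_inj (leq0n k) kj (set11 u1) u1k.
have le1 := reach_sub_unreachedD1 (leq_subr _ _) sub u1Q u1_notin.
have kj1 : k - j.+2 = 1 by apply/eqP; rewrite eqn_leq le1 subn_gt0.
by rewrite kj1 in sub.
Qed.

Lemma unreached_v_split x :
  u1 \in Q -> e u1 x -> x \notin Q -> Q :\: [set u1; v] = reach 1 x.
Proof.
move=> u1Q u1x xQ; apply/esym/eqP; rewrite eqEcard.
have u1v : u1 != v.
  by apply: contraNneq (v_notin_reach_u1 Hu Hv (i:=0) k_gt1) => <-; apply: set11.
have u1vQ : [set u1; v] \subset Q.
  by apply/subsetP => w /set2P[]->; rewrite ?self_unreached.
rewrite cardsD (setIidPr u1vQ) cards2 u1v card_unreached card_reach // andbT.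
have sub := unreached_v_grandchildren u1Q u1x xQ.
apply/subsetP => z zx; rewrite in_setD in_set2 negb_or (subsetP sub _ zx) andbT.
have z2 : z \in reach 2 u1.
  by apply/(reachD 1 1); exists x; rewrite // reach1.
by case: (reach2_u1_fresh Hu Hv z2) => /negPf-> /negPf->.
Qed.

Lemma children_u1_unreached_v : reach 1 u1 \subset Q.
Proof.
have [u1Q|u1Q] := boolP (u1 \in Q); last first.
  have /ballP[j jk u1j] := ball_u1_reached_by_v1 Hu Hv (ball_reach k_gt0 (set11 u1)) u1Q.
  have j0 : 0 < j by case: j {jk} u1j => //; rewrite reach0 (negPf u1_neq_v1).
  have jk' : 0 < j < k by rewrite j0.
  have := reach_tail_unreached Hu Hv (i:=0) jk' (set11 u1) u1j.
  by rewrite (reach_v1_u1 Hu Hv jk' u1j) -{1}(prednK k_gt0) subSnn.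
(* An out-neighbour x of u1 outside Q would give Q :\: [set u1; v] = N+(x),
   leaving room neither for the other out-neighbour y of u1 nor for N+(y). *)
apply/subsetP => x; rewrite reach1 => u1x; apply: contraT => xQ.
have [y u1y yx] := other_out_arc u1 x.
have yu1 : y \in reach 1 u1 by rewrite reach1.
have [yQ|yQ] := boolP (y \in Q).
  have : y \in Q :\: [set u1; v].
    rewrite in_setD in_set2 yQ andbT negb_or; apply/andP; split.
      exact: reach_neq k_gt0 (leq0n k) isT yu1 (set11 u1).
    by apply: contraNneq (v_notin_reach_u1 Hu Hv (i:=1) k_gt2) => <-.
  rewrite (unreached_v_split u1Q u1x xQ) => xy.
  have y2 : y \in reach 2 u1 by apply/(reachD 1 1); exists x; rewrite // reach1.
  by have := reach_inj k_gt1 k_gt0 y2 yu1.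
have /card_gt0P[w yw] : 0 < #|outN e y| by rewrite (reg y).1.
have wx : w \in reach 1 x.
  rewrite -(unreached_v_split u1Q u1x xQ) (unreached_v_split u1Q u1y yQ).
  by rewrite reach1 -in_outN.
have wy : w \in reach 1 y by rewrite reach1 -in_outN.
by rewrite (reach_first_arc_inj k_gt1 k_gt1 u1x u1y wx wy) eqxx in yx.
Qed.

Lemma unreached_v_rest z z' : z \in Q -> z' \in Q ->
  z \notin v |: reach 1 u1 -> z' \notin v |: reach 1 u1 -> z = z'.
Proof.
have sub : v |: reach 1 u1 \subset Q.
  by rewrite subUset sub1set self_unreached children_u1_unreached_v.
have /cards1P[w Qw] : #|Q :\: (v |: reach 1 u1)| == 1.
  rewrite cardsD (setIidPr sub) cardsU1 (v_notin_reach_u1 Hu Hv (i:=1) k_gt2).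
  by rewrite card_reach ?card_unreached.
move=> zQ z'Q zN z'N.
have : z \in [set w] by rewrite -Qw in_setD zN zQ.
have : z' \in [set w] by rewrite -Qw in_setD z'N z'Q.
by rewrite !inE => /eqP-> /eqP->.
Qed.

Lemma reach2_u1_excess z : z \in reach 2 u1 -> z \notin Q -> z \in excess u2.
Proof.
move=> z2 zQ; case/reachSr: (z2) => p p1 pz.
apply: (excess_u2_arc Hu Hv _ _ pz) => //.
- exact: (subsetP children_u1_unreached_v).
- exact: ball_reach k_gt1 p1.
- exact: ball_reach k_gt2 z2.
- by apply: contraNneq (v1_notin_reach_u1 (i:=2) isT) => <-.
Qed.

Lemma reach2_u1_meets_unreached_v : exists2 z0, z0 \in reach 2 u1 & z0 \in Q.
Proof.
apply/exists_inP; apply: contraT; rewrite negb_exists_in => /forall_inP noQ.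
have : reach 2 u1 \subset excess u2.
  by apply/subsetP => z z2; rewrite reach2_u1_excess ?noQ.
by move/subset_leq_card; rewrite card_reach // card_excess.
Qed.

Section Grandchild.
Variable z0 : V.
Hypotheses (z02 : z0 \in reach 2 u1) (z0Q : z0 \in Q).

Lemma excess_u2_eq : excess u2 = reach 2 u1 :\ z0.
Proof.
have [_ z0v z01] := reach2_u1_fresh Hu Hv z02.
apply/esym/eqP; rewrite eqEcard card_excess.
have -> : #|reach 2 u1 :\ z0| = 3.
  by have := cardsD1 z0 (reach 2 u1); rewrite z02 card_reach //; case.
rewrite leqnn andbT; apply/subsetP => z; rewrite in_setD1 => /andP[zz0 z2].
apply: reach2_u1_excess => //; apply: contra zz0 => zQ; apply/eqP.
have [_ zv z1] := reach2_u1_fresh Hu Hv z2.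
by apply: unreached_v_rest; rewrite // in_setU1 negb_or ?zv ?z0v.
Qed.

Lemma outN_grandchild : outN e z0 = [set v; v1].
Proof.
apply/eqP; rewrite eqEcard cards2 (reg z0).1 ltnS leq_b1 andbT.
apply/subsetP => z; rewrite in_outN in_set2 => z0z.
have z3 : z \in reach 3 u1 by apply/reachSr; exists z0.
have zz0 : z != z0 by apply: reach_neq k_gt2 k_gt1 isT z3 z02.
have z1 : z \notin reach 1 u1 by apply/negP => z1; have := reach_inj k_gt2 k_gt0 z3 z1.
have [_ z0v z01] := reach2_u1_fresh Hu Hv z02.
have [zQ|zQ] := boolP (z \in Q).
  have [->|zv] := eqVneq z v; first by [].
  have := unreached_v_rest zQ z0Q; rewrite !in_setU1 !negb_or zv z0v z1 z01.
  by move=> /(_ isT isT) zE; rewrite zE eqxx in zz0.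
have [->|zv1] := eqVneq z v1; first by rewrite orbT.
have z0u1 : z0 \in ball k u1 := ball_reach k_gt2 z02.
move: zv1; move/(excess_u2_arc Hu Hv z0Q z0u1 z0z (ball_reach k_ge4 z3) zQ).
rewrite excess_u2_eq in_setD1 => /andP[_ z2].
by have := reach_inj k_gt2 k_gt1 z3 z2.
Qed.

End Grandchild.

Lemma disjoint_outN_absurd : False.
Proof.
have [z0 z02 z0Q] := reach2_u1_meets_unreached_v.
have Hz0 := outN_grandchild z02 z0Q.
have z0v1 : v1 \in reach 1 z0 by rewrite reach1 (outN2_arcr Hz0).
have z0vv1 : v1 \in reach 2 z0.
  by apply/(reachD 1 1); exists v; rewrite reach1 ?(outN2_arcl Hz0) ?(outN2_arcl Hv).
by have := reach_inj k_gt0 k_gt1 z0v1 z0vv1.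
Qed.

End DisjointOutNeighbourhoods.
End Digraph.

Theorem lemma7 (V : finType) (e : rel V) (k : nat) :
  4 <= k -> two_k_plus3_digraph e k ->
  forall u v u1 u2 v1 : V,
    u != v ->
    outN e u :&: outN e v = [set u2] ->
    outN e u = [set u1; u2] ->
    outN e v = [set v1; u2] ->
    outN e u1 :&: outN e v1 != set0.
Proof.
move=> k_ge4 [geo reg order] u v u1 u2 v1 _ _ Hu Hv.
by apply/eqP => disj; apply: (disjoint_outN_absurd geo reg order k_ge4 Hu Hv disj).
Qed.
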